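(* For $A\in\mathrm{Sym}(3,\mathbb{C})$ let $c_3(A)$ be the cubic form $\underline{x}\mapsto\det(\underline{x}\,|\,A\underline{x}\,|\,A^2\underline{x})$ on $\mathbb{C}^3$. Then the map $c_3:\mathrm{Sym}(3,\mathbb{C})\to\mathrm{S}^3(\mathbb{C}^3)^\star$ is not identically zero, and for every $A\in\mathrm{Sym}(3,\mathbb{C})$ the cubic form $c_3(A)$ lies in the kernel of the Laplace operator $\Delta=\sum_{i=1}^3\frac{\partial^2}{\partial x_i^2}$.
   Context: $\mathrm{Sym}(3,\mathbb{C})$ is the space of complex symmetric $3\times3$ matrices; $\mathrm{S}^3(\mathbb{C}^3)^\star$ is the space of homogeneous cubic polynomials in $x_1,x_2,x_3$; $(\underline{x}\,|\,A\underline{x}\,|\,A^2\underline{x})$ is the matrix with these columns. *)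

(* complex numbers as R[i] for R : realType (= the complex
   numbers C when R is the real numbers), cubic forms as multivariate
   polynomials {mpoly C[3]}, partial derivatives via mpoly's mderiv. *)
From HB Require Import structures.
From mathcomp Require Import all_boot all_order all_algebra.
From mathcomp Require Import reals complex.
From mathcomp Require Import mpoly.
Set Implicit Arguments. Unset Strict Implicit. Unset Printing Implicit Defensive.
Import Order.TTheory GRing.Theory Num.Theory.
Local Open Scope ring_scope.
Local Open Scope complex_scope.

Definition symmetric_mx (K : Type) (A : 'M[K]_3) : Prop := A^T = A.

Definition xvec (K : comRingType) : 'cV[{mpoly K[3]}]_3 :=
  \col_(i < 3) 'X_i.

Definition c3 (K : comRingType) (A : 'M[K]_3) : {mpoly K[3]} :=
  let AP := map_mx (fun a : K => a%:MP) A in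
  let x := xvec K in
  \det (row_mx x (row_mx (AP *m x) ((AP *m AP) *m x))).

Definition laplacian (K : comRingType) (p : {mpoly K[3]}) : {mpoly K[3]} :=
  \sum_(i < 3) mderiv i (mderiv i p).

(* Write the entries of (x | Ax | A^2 x) as linear forms l_(k,i)(x) = (A^k x)_i.
   The Laplacian of a product of three linear forms is twice the sum, over the
   three pairs of factors, of the scalar product of their gradients times the
   remaining factor.  For l_(k,i) and l_(l,j) that scalar product is
   (A^k (A^l)^T)_ij, which for symmetric A is (A^(k+l))_ij and hence does not
   change when the columns k and l are swapped; so in the Leibniz expansion of
   the determinant the contributions of a permutation and of its composite with
   the transposition (k l) cancel.  For nonvanishing, c_3 of a diagonal matrix
   diag(d) is the Vandermonde product of d times x_1 x_2 x_3. *)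

From HB Require Import structures.
From mathcomp Require Import all_boot all_order all_algebra.
From mathcomp Require Import reals complex.
From mathcomp Require Import mpoly ring.
Set Implicit Arguments. Unset Strict Implicit. Unset Printing Implicit Defensive.
Import GRing.Theory Num.Theory.
Local Open Scope ring_scope.

Lemma det_mx33 (K : comNzRingType) (M : 'M[K]_3) : \det M =
    M 0 0 * M 1 1 * M 2 2 - M 0 0 * M 1 2 * M 2 1
  - M 0 1 * M 1 0 * M 2 2 + M 0 1 * M 1 2 * M 2 0
  + M 0 2 * M 1 0 * M 2 1 - M 0 2 * M 1 1 * M 2 0.
Proof.
rewrite (expand_det_row _ 0) !big_ord_recl big_ord0 /cofactor.
rewrite !(expand_det_row _ 0) !big_ord_recl !big_ord0 /cofactor ?det_mx00 ?det_mx11.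
rewrite !mxE.
set N := fun a b : nat => M (inord a) (inord b).
have -> : M = \matrix_(i, j) N i j by apply/matrixP => i j; rewrite mxE /N !inord_val.
rewrite !mxE /= /bump /=; ring.
Qed.

Lemma trmxX (K : comNzRingType) n (A : 'M[K]_n) k : (A ^+ k)^T = A^T ^+ k.
Proof.
elim: k => [|k IHk]; first by rewrite !expr0 trmx1.
by rewrite exprS -mulmxE trmx_mul IHk exprSr.
Qed.

Section RowForms.
Variables (K : comNzRingType) (n : nat).

Lemma mderivX1 (i j : 'I_n) : mderiv i ('X_j : {mpoly K[n]}) = (i == j)%:R.
Proof.
rewrite mderivX mnm1E; have [<-|ne_ij] := eqVneq i j.
  suff -> : (U_(i) - U_(i) = 0)%MM by rewrite scale1r mpolyX0.
  by apply/mnmP => k; rewrite mnmBE subnn mnm0E.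
by rewrite scale0r.
Qed.

Definition rowform (M : 'M[K]_n) (i : 'I_n) : {mpoly K[n]} := \sum_j M i j *: 'X_j.

Lemma mderiv_rowform M i k : mderiv k (rowform M i) = (M i k)%:MP.
Proof.
rewrite /rowform raddf_sum (bigD1 k) //= mderivZ mderivX1 eqxx big1 ?addr0.
  by rewrite -mul_mpolyC mulr1.
by move=> j /negbTE ne_jk; rewrite mderivZ mderivX1 eq_sym ne_jk scaler0.
Qed.

Lemma rowform1 i : rowform 1%:M i = 'X_i.
Proof.
rewrite /rowform (bigD1 i) //= mxE eqxx scale1r big1 ?addr0 //.
by move=> j /negbTE ne_ji; rewrite mxE eq_sym ne_ji scale0r.
Qed.

Lemma rowform_mul_diag (d : 'rV[K]_n) M i :
  rowform (diag_mx d *m M) i = d 0 i *: rowform M i.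
Proof.
rewrite mul_diag_mx /rowform scaler_sumr; apply: eq_bigr => j _.
by rewrite mxE scalerA.
Qed.

Lemma rowform_diag_exp (d : 'rV[K]_n) k i :
  rowform (diag_mx d ^+ k) i = d 0 i ^+ k *: 'X_i.
Proof.
elim: k => [|k IHk]; first by rewrite expr0 rowform1 scale1r.
by rewrite exprS -mulmxE rowform_mul_diag IHk scalerA exprS.
Qed.

End RowForms.

Lemma mulmx_xvec (K : comNzRingType) (M : 'M[K]_3) i :
  (map_mx (fun a => a%:MP) M *m xvec K) i 0 = rowform M i.
Proof.
rewrite mxE /rowform; apply: eq_bigr => j _.
by rewrite !mxE mul_mpolyC.
Qed.

Lemma row_mx3E (T : Type) (x y z : 'cV[T]_3) i :
  [/\ row_mx x (row_mx y z) i 0 = x i 0, row_mx x (row_mx y z) i 1 = y i 0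
    & row_mx x (row_mx y z) i 2 = z i 0].
Proof.
split.
- have -> : (0 : 'I_3) = lshift 2 (0 : 'I_1) by apply: val_inj.
  exact: row_mxEl.
- have -> : (1 : 'I_3) = rshift 1 (lshift 1 (0 : 'I_1)) by apply: val_inj.
  by rewrite row_mxEr row_mxEl.
- have -> : (2 : 'I_3) = rshift 1 (rshift 1 (0 : 'I_1)) by apply: val_inj.
  by rewrite !row_mxEr.
Qed.

Lemma c3E (K : comNzRingType) (A : 'M[K]_3) :
  c3 A = \det (\matrix_(i, k) rowform (A ^+ k) i).
Proof.
rewrite /c3; congr (\det _); apply/matrixP => i k; rewrite [RHS]mxE.
have [E0 E1 E2] := row_mx3E (xvec K) (map_mx (fun a => a%:MP) A *m xvec K)
  (map_mx (fun a => a%:MP) A *m map_mx (fun a => a%:MP) A *m xvec K) i.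
have [->|[->|->]] : k = 0 \/ k = 1 \/ k = 2.
  by case: k => [[|[|[|//]]] hk]; [left | right; left | right; right]; apply: val_inj.
- by rewrite E0 expr0 rowform1 /xvec mxE.
- by rewrite E1 expr1 mulmx_xvec.
- by rewrite E2 -map_mxM mulmx_xvec expr2.
Qed.

Section Laplacian.
Variable K : comNzRingType.
Implicit Types (p q : {mpoly K[3]}) (M N Q : 'M[K]_3).

Lemma laplacianD p q : laplacian (p + q) = laplacian p + laplacian q.
Proof. by rewrite /laplacian -big_split; apply: eq_bigr => i _; rewrite !mderivD. Qed.

Lemma laplacianN p : laplacian (- p) = - laplacian p.
Proof. by rewrite /laplacian -sumrN; apply: eq_bigr => i _; rewrite !mderivN. Qed.

Lemma sum_mpolyC_mul M N i j :
  \sum_m (M i m)%:MP * (N j m)%:MP = ((M *m N^T) i j)%:MP :> {mpoly K[3]}.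
Proof. by rewrite mxE rmorph_sum; apply: eq_bigr => m _; rewrite mxE rmorphM. Qed.

Lemma laplacian_rowform3 M N Q i j l :
  laplacian (rowform M i * rowform N j * rowform Q l) =
  2 * (((M *m N^T) i j)%:MP * rowform Q l + ((M *m Q^T) i l)%:MP * rowform N j
       + ((N *m Q^T) j l)%:MP * rowform M i).
Proof.
have D2 m : mderiv m (mderiv m (rowform M i * rowform N j * rowform Q l)) =
    2 * ((M i m)%:MP * (N j m)%:MP * rowform Q l + (M i m)%:MP * (Q l m)%:MP * rowform N j
         + (N j m)%:MP * (Q l m)%:MP * rowform M i).
  by rewrite !(mderivD, mderivM, mderiv_rowform, mderivC); ring.
rewrite /laplacian (eq_bigr _ (fun m _ => D2 m)) -mulr_sumr !big_split /=.
by rewrite -!mulr_suml !sum_mpolyC_mul.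
Qed.

Lemma laplacian_det_rowform (P : 'I_3 -> 'M[K]_3) :
  (forall k l, P k *m (P l)^T = P l *m (P k)^T) ->
  laplacian (\det (\matrix_(i, k) rowform (P k) i)) = 0.
Proof.
move=> hP; rewrite det_mx33 !mxE !(laplacianD, laplacianN) !laplacian_rowform3.
by rewrite !(hP 1 0) !(hP 2 0) !(hP 2 1); ring.
Qed.

End Laplacian.

Lemma c3_diag (K : comNzRingType) (d : 'rV[K]_3) :
  c3 (diag_mx d) =
  ((d 0 1 - d 0 0) * (d 0 2 - d 0 0) * (d 0 2 - d 0 1)) *: ('X_0 * 'X_1 * 'X_2).
Proof.
rewrite c3E det_mx33 !mxE !rowform_diag_exp -!mul_mpolyC !rmorphXn !rmorphM !rmorphB /=.
ring.
Qed.

Lemma laplacian_c3 (K : comNzRingType) (A : 'M[K]_3) :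
  A^T = A -> laplacian (c3 A) = 0.
Proof.
move=> symA; rewrite c3E; apply: laplacian_det_rowform => k l.
by rewrite !trmxX symA mulmxE -!exprD addnC.
Qed.

Lemma mpolyX1_neq0 (K : nzRingType) n (i : 'I_n) : 'X_i != 0 :> {mpoly K[n]}.
Proof.
apply/eqP => /(congr1 (mcoeff U_(i))) /eqP.
by rewrite mcoeffXU mcoeff0 eqxx oner_eq0.
Qed.

Lemma c3_diag_neq0 (K : idomainType) (d : 'rV[K]_3) :
  d 0 0 != d 0 1 -> d 0 0 != d 0 2 -> d 0 1 != d 0 2 -> c3 (diag_mx d) != 0.
Proof.
move=> d01 d02 d12; rewrite c3_diag -mul_mpolyC.
rewrite !mulf_neq0 ?mpolyX1_neq0 ?mpolyC_eq0 //.
by rewrite !mulf_neq0 // subr_eq0 eq_sym.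
Qed.

Theorem proposition6p1 (R : realType) :
  (exists A : 'M[R[i]]_3, symmetric_mx A /\ c3 A != 0) /\
  (forall A : 'M[R[i]]_3, symmetric_mx A -> laplacian (c3 A) = 0).
Proof.
split; last exact: laplacian_c3.
exists (diag_mx (\row_i (i : nat)%:R)); split; first exact: tr_diag_mx.
by apply: c3_diag_neq0; rewrite !mxE /= eqr_nat.
Qed.
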